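(* Let $\beta\ge1$ and suppose there are at least two distinct alternate Lyndon words over a finite alphabet $\mathcal{A}$ attached to $\beta$. Then there exists a weak (i.e. periodic) alternate Lyndon word attached to $\beta$.
   Context: Alternate order: for two words $x=x_1x_2\cdots$, $y=y_1y_2\cdots$ over a finite alphabet of integers, $x\prec y$ iff there is $k$ with $x_i=y_i$ for all $i<k$ and $(-1)^k(x_k-y_k)<0$; $x\preceq y$ iff $x=y$ or $x\prec y$. An alternate Lyndon word is an infinite word $(d_i)_{i\ge1}$ with $d_1d_2\cdots\preceq d_nd_{n+1}\cdots$ for all $n\ge1$; it is weak if equality $d_1d_2\cdots=d_nd_{n+1}\cdots$ holds for some $n>1$ (equivalently, it is purely periodic). Its alternate Lyndon system is the set of infinite words $x$ with $d_1d_2\cdots\preceq x_kx_{k+1}\cdots$ for all $k\ge1$, and its entropy is $\lim_n\frac1n\log H_n$ with $H_n$ the number of words of length $n$ occurring as finite factors of elements of the system. An alternate Lyndon word is attached (associated) to $\beta$ if its alternate Lyndon system has entropy $\log\beta$. *)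

From Stdlib Require Import Reals ZArith List.
Import ListNotations.
Open Scope R_scope.

(* Infinite words over the integers, indexed from 0 (paper indexes from 1). *)
Definition word := nat -> Z.

Definition shift (n : nat) (x : word) : word := fun i => x (n + i)%nat.

Definition over (A : list Z) (x : word) : Prop := forall i, In (x i) A.

(* Alternate order: x < y iff there is k (1-based; k = j+1 with j 0-based)
   with x_i = y_i for i < k and (-1)^k (x_k - y_k) < 0. *)
Definition alt_lt (x y : word) : Prop :=
  exists j : nat, (forall i, (i < j)%nat -> x i = y i) /\
    (Z.pow (-1) (Z.of_nat (S j)) * (x j - y j) < 0)%Z.

Definition alt_le (x y : word) : Prop := (forall i, x i = y i) \/ alt_lt x y.

(* Alternate Lyndon word over A: d <= d_n d_{n+1} ... for all n >= 1,
   i.e. d <= shift n d for all n >= 0 (0-based). *)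
Definition alt_lyndon (A : list Z) (d : word) : Prop :=
  over A d /\ forall n : nat, alt_le d (shift n d).

(* Weak: d_1 d_2 ... = d_n d_{n+1} ... for some n > 1, i.e. d = shift n d, n >= 1. *)
Definition weak (d : word) : Prop :=
  exists n : nat, (1 <= n)%nat /\ forall i, d i = shift n d i.

Definition lyndon_system (A : list Z) (d : word) (x : word) : Prop :=
  over A x /\ forall k : nat, alt_le d (shift k x).

Definition sys_factor (A : list Z) (d : word) (n : nat) (w : list Z) : Prop :=
  length w = n /\
  exists x, lyndon_system A d x /\
    exists k : nat, forall i, (i < n)%nat -> nth i w 0%Z = x (k + i)%nat.

Definition is_card (P : list Z -> Prop) (h : nat) : Prop :=
  exists L : list (list Z), NoDup L /\ (forall w, In w L <-> P w) /\ length L = h.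

(* The alternate Lyndon system of d has entropy log beta:
   H_n = number of factors of length n, and (1/n) log H_n -> log beta. *)
Definition attached (A : list Z) (d : word) (beta : R) : Prop :=
  exists H : nat -> nat,
    (forall n, is_card (sys_factor A d n) (H n)) /\
    Un_cv (fun m => ln (INR (H (S m))) / INR (S m)) (ln beta).

From Stdlib Require Import Reals ZArith List Lia Lra Classical ClassicalEpsilon.

(* Let a ≺ b be alternate Lyndon words first differing at position j, let L be the least even
   number beyond j, and q = (b_0 ⋯ b_(L-1))^ω. Then a ⪯ q ⪯ b, and q is again alternate Lyndon:
   comparing q with its shift by 0 < r < L, either b_0 ⋯ b_(L-1) has no border at r and the
   Lyndon property of b decides, or r is even, which a ⪯ σ^r a rules out, or r is odd and the
   comparison reduces to the complementary shift L - r, the common prefix of odd length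
   reversing the order. Since d ⪯ d' shrinks the alternate Lyndon system, the factor counts of q
   lie between those of b and of a, so q also has entropy log β. *)
Local Open Scope nat_scope.

Definition sgn (n : nat) : Z := Z.pow (-1) (Z.of_nat n).

Lemma sgn_add m n : sgn (m + n) = (sgn m * sgn n)%Z.
Proof. unfold sgn. rewrite Nat2Z.inj_add. apply Z.pow_add_r; lia. Qed.

Lemma sgn_even n : Nat.Even n -> sgn n = 1%Z.
Proof.
  intros [k ->]. unfold sgn. rewrite Nat2Z.inj_mul, Z.pow_mul_r by lia.
  apply Z.pow_1_l. lia.
Qed.

Lemma sgn_odd n : Nat.Odd n -> sgn n = (-1)%Z.
Proof. intros [k ->]. rewrite sgn_add, sgn_even by (exists k; lia). reflexivity. Qed.

Lemma sgn_cases n : sgn n = 1%Z \/ sgn n = (-1)%Z.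
Proof.
  destruct (Nat.Even_or_Odd n) as [E|O]; [left; apply sgn_even | right; apply sgn_odd]; auto.
Qed.

Definition eq_upto (j : nat) (x y : word) : Prop := forall i, i < j -> x i = y i.

Lemma first_diff (x y : word) n : x n <> y n ->
  exists j, eq_upto j x y /\ x j <> y j.
Proof.
  induction n as [n IH] using (well_founded_induction lt_wf). intros Hn.
  destruct (classic (eq_upto n x y)) as [H|H]; [now exists n|].
  apply not_all_ex_not in H as [i Hi]. apply imply_to_and in Hi as [Hin Hxy].
  exact (IH i Hin Hxy).
Qed.

Lemma alt_lt_sign x y e : alt_lt x y -> eq_upto e x y -> x e <> y e ->
  (sgn (S e) * (x e - y e) < 0)%Z.
Proof.
  intros [j [Hj Hs]] He Hne. fold (sgn (S j)) in Hs.
  destruct (lt_eq_lt_dec j e) as [[H|<-]|H]; auto.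
  - rewrite (He j H) in Hs. lia.
  - exfalso. apply Hne, Hj, H.
Qed.

Lemma alt_le_sign x y e : alt_le x y -> eq_upto e x y -> x e <> y e ->
  (sgn (S e) * (x e - y e) < 0)%Z.
Proof.
  intros [H|H] He Hne; [exfalso; apply Hne, H | exact (alt_lt_sign _ _ _ H He Hne)].
Qed.

Lemma alt_lt_connex x y i : x i <> y i -> alt_lt x y \/ alt_lt y x.
Proof.
  intros Hi. destruct (first_diff x y i Hi) as [j [Hj Hne]].
  destruct (Z_lt_le_dec (sgn (S j) * (x j - y j)) 0) as [Hs|Hs].
  - left. exists j. split; assumption.
  - right. exists j. split.
    + intros k Hk. symmetry. apply Hj, Hk.
    + fold (sgn (S j)). destruct (sgn_cases (S j)) as [E|E]; rewrite E in *; lia.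
Qed.

Lemma alt_lt_trans x y z : alt_lt x y -> alt_lt y z -> alt_lt x z.
Proof.
  intros [j1 [H1 S1]] [j2 [H2 S2]]. fold (sgn (S j1)) in S1. fold (sgn (S j2)) in S2.
  exists (Nat.min j1 j2). split.
  - intros i Hi. rewrite H1, H2 by lia. reflexivity.
  - fold (sgn (S (Nat.min j1 j2))).
    destruct (lt_eq_lt_dec j1 j2) as [[H|<-]|H].
    + rewrite Nat.min_l, <- (H2 j1 H) by lia. exact S1.
    + rewrite Nat.min_id. lia.
    + rewrite Nat.min_r, (H1 j2 H) by lia. exact S2.
Qed.

Lemma alt_lt_eq_l x x' y : (forall i, x i = x' i) -> alt_lt x y -> alt_lt x' y.
Proof. intros E [j [Hj Hs]]. exists j. split; [intros i Hi|]; rewrite <- !E; auto. Qed.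

Lemma alt_lt_eq_r x y y' : (forall i, y i = y' i) -> alt_lt x y -> alt_lt x y'.
Proof. intros E [j [Hj Hs]]. exists j. split; [intros i Hi|]; rewrite <- !E; auto. Qed.

Lemma alt_le_trans x y z : alt_le x y -> alt_le y z -> alt_le x z.
Proof.
  intros [H1|H1] [H2|H2].
  - left. intros i. rewrite H1. apply H2.
  - right. eapply alt_lt_eq_l; [|exact H2]. intros i. symmetry. apply H1.
  - right. eapply alt_lt_eq_r; eauto.
  - right. eapply alt_lt_trans; eauto.
Qed.

(* Both words start with x_0 ⋯ x_(k-1) and continue as shift k x and x respectively; the odd
   length of the common prefix reverses the comparison. *)
Lemma shift_odd_border_lt (x : word) (r k : nat) :
  (forall s, x (r + k + s) = x s) -> Nat.Odd k ->
  eq_upto k (shift r x) x -> alt_lt x (shift k x) -> alt_lt x (shift r x).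
Proof.
  unfold shift. intros Hper Hk Hb [e [He Hse]]. fold (sgn (S e)) in Hse.
  assert (Hrk : forall s, x (r + (k + s)) = x s).
  { intros s. rewrite Nat.add_assoc. apply Hper. }
  exists (k + e). split.
  - intros i Hi. destruct (lt_dec i k) as [Hik|Hik].
    + symmetry. apply Hb, Hik.
    + replace i with (k + (i - k)) by lia. rewrite Hrk. symmetry. apply He. lia.
  - fold (sgn (S (k + e))). rewrite Hrk.
    replace (S (k + e)) with (S e + k) by lia. rewrite sgn_add, (sgn_odd k Hk).
    lia.
Qed.

Lemma shift_eq_of_borders (x : word) (r k : nat) : 0 < r ->
  (forall s, x (r + k + s) = x s) ->
  eq_upto k (shift r x) x -> eq_upto r (shift k x) x -> forall i, shift r x i = x i.
Proof.
  unfold shift. intros Hr Hper Hb1 Hb2 i.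
  induction i as [i IH] using (well_founded_induction lt_wf).
  destruct (lt_dec i k) as [Hik|Hik]; [apply Hb1, Hik|].
  destruct (lt_dec i (r + k)) as [Hirk|Hirk].
  - replace i with (k + (i - k)) by lia.
    rewrite Nat.add_assoc, Hper. symmetry. apply Hb2. lia.
  - replace i with (r + k + (i - r - k)) by lia.
    rewrite Hper, <- (IH (i - r - k)) by lia.
    replace (r + (r + k + (i - r - k))) with (r + k + (r + (i - r - k))) by lia.
    apply Hper.
Qed.

(* An even border of b_0 ⋯ b_j carries over to a and would make σ^r a ≺ a. *)
Lemma alt_lt_no_even_border A (a b : word) j r : alt_lyndon A a ->
  eq_upto j a b -> (sgn (S j) * (a j - b j) < 0)%Z -> Nat.Even r -> 0 < r <= j ->
  (forall t, t <= j - r -> b (r + t) = b t) -> False.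
Proof.
  intros [_ Ha] Hab Hs Hr Hrj Hbord. set (i := j - r).
  assert (Hbj : b j = b i) by (replace j with (r + i) by (unfold i; lia); apply Hbord; lia).
  assert (Hagree : eq_upto i a (shift r a)).
  { intros t Ht. unfold shift. rewrite !Hab by (unfold i in *; lia).
    symmetry. apply Hbord. lia. }
  assert (Hdiff : a i <> shift r a i).
  { unfold shift. replace (r + i) with j by (unfold i; lia).
    rewrite (Hab i), <- Hbj by (unfold i; lia). intros E. rewrite E in Hs. lia. }
  pose proof (alt_le_sign _ _ _ (Ha r) Hagree Hdiff) as Hs'. unfold shift in Hs'.
  replace (r + i) with j in Hs' by (unfold i; lia).
  rewrite (Hab i), <- Hbj in Hs' by (unfold i; lia).
  replace (S j) with (S i + r) in Hs by (unfold i; lia).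
  rewrite sgn_add, (sgn_even r Hr) in Hs. lia.
Qed.

Definition periodize (L : nat) (b : word) : word := fun i => b (i mod L).

Section Periodize.

Variables (L : nat) (b : word).
Hypothesis HL : L <> 0.

Lemma periodize_small i : i < L -> periodize L b i = b i.
Proof. intros Hi. unfold periodize. rewrite Nat.mod_small; auto. Qed.

Lemma periodize_add_mul i n : periodize L b (i + n * L) = periodize L b i.
Proof. unfold periodize. rewrite Nat.Div0.mod_add. reflexivity. Qed.

Lemma periodize_shift_mod n i : shift n (periodize L b) i = shift (n mod L) (periodize L b) i.
Proof. unfold shift, periodize. rewrite Nat.Div0.add_mod_idemp_l. reflexivity. Qed.

Lemma periodize_weak : weak (periodize L b).
Proof.
  exists L. split; [lia|]. intros i. unfold shift.
  replace (L + i) with (i + 1 * L) by lia. symmetry. apply periodize_add_mul.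
Qed.

Lemma periodize_le A : Nat.Even L -> alt_lyndon A b -> alt_le (periodize L b) b.
Proof.
  intros HLe [_ Hb]. set (q := periodize L b).
  destruct (classic (forall i, q i = b i)) as [E|E]; [now left|right].
  apply not_all_ex_not in E as [m0 Hm0].
  destruct (first_diff q b m0 Hm0) as [m [Hqm Hdm]].
  exists m. split; [exact Hqm|]. fold (sgn (S m)).
  pose proof (Nat.div_mod_eq m L) as Em. pose proof (Nat.mod_upper_bound m L HL).
  set (n := m / L) in *. set (t := m mod L) in *. clearbody n t.
  assert (Hqt : q m = b t).
  { rewrite Em, Nat.add_comm, Nat.mul_comm. unfold q. rewrite periodize_add_mul.
    apply periodize_small. lia. }
  assert (Hagree : eq_upto t b (shift (n * L) b)).
  { intros i Hi. unfold shift. rewrite <- (periodize_small i), <- Hqm by lia.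
    unfold q. rewrite Nat.add_comm. symmetry. apply periodize_add_mul. }
  assert (Hdiff : b t <> shift (n * L) b t).
  { unfold shift. rewrite <- Hqt. replace (n * L + t) with m by lia. exact Hdm. }
  pose proof (alt_le_sign _ _ _ (Hb (n * L)) Hagree Hdiff) as Hs.
  unfold shift in Hs. rewrite <- Hqt in Hs. replace (n * L + t) with m in Hs by lia.
  replace (S m) with (S t + n * L) by lia.
  rewrite sgn_add, (sgn_even (n * L)) by (apply Nat.Even_mul_r; exact HLe). lia.
Qed.

Lemma periodize_eq_upto r m : r + m <= L ->
  eq_upto m (shift r b) b -> eq_upto m (shift r (periodize L b)) (periodize L b).
Proof. intros Hrm Hb i Hi. unfold shift in *. rewrite !periodize_small by lia. auto. Qed.

Lemma periodize_lt_shift A r : alt_lyndon A b -> r < L ->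
  ~ eq_upto (L - r) (shift r b) b -> alt_lt (periodize L b) (shift r (periodize L b)).
Proof.
  intros [_ Hb] Hr Hne. apply not_all_ex_not in Hne as [t Ht].
  apply imply_to_and in Ht as [Ht Hbt].
  destruct (first_diff b (shift r b) t (not_eq_sym Hbt)) as [e [Hagree Hdiff]].
  pose proof (alt_le_sign _ _ _ (Hb r) Hagree Hdiff) as Hs.
  assert (He : e <= t).
  { destruct (le_gt_dec e t) as [He|He]; [exact He|].
    exfalso. apply Hbt. symmetry. apply (Hagree t), He. }
  exists e. split.
  - intros i Hi. unfold shift. rewrite !periodize_small by lia. apply Hagree. lia.
  - fold (sgn (S e)). unfold shift in *. rewrite !periodize_small by lia. exact Hs.
Qed.

Lemma periodize_lyndon A a j : alt_lyndon A a -> alt_lyndon A b ->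
  eq_upto j a b -> (sgn (S j) * (a j - b j) < 0)%Z ->
  Nat.Even L -> j < L <= j + 2 -> alt_lyndon A (periodize L b).
Proof.
  intros La Lb Hab Hs HLe HjL. set (q := periodize L b).
  split; [intros i; apply (proj1 Lb)|]. intros n.
  apply alt_le_trans with (shift (n mod L) q).
  2:{ left. intros i. symmetry. apply periodize_shift_mod. }
  pose proof (Nat.mod_upper_bound n L HL). set (r := n mod L) in *. clearbody r.
  destruct (Nat.eq_dec r 0) as [->|Hr0]; [now left|].
  destruct (classic (eq_upto (L - r) (shift r b) b)) as [Hb1|Hb1].
  2:{ right. apply (periodize_lt_shift A); assumption. }
  destruct (Nat.Even_or_Odd r) as [Hre|Hro].
  - exfalso. apply (alt_lt_no_even_border A a b j r La Hab Hs Hre).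
    + destruct Hre as [m1 ->], HLe as [m2 ->]. lia.
    + intros t Ht. apply Hb1. lia.
  - set (k := L - r).
    assert (Hko : Nat.Odd k).
    { destruct HLe as [m1 HLe], Hro as [m2 ->]. exists (m1 - m2 - 1). unfold k. lia. }
    assert (Hper : forall s, q (r + k + s) = q s).
    { intros s. replace (r + k + s) with (s + 1 * L) by (unfold k; lia).
      apply periodize_add_mul. }
    assert (Hb1q : eq_upto k (shift r q) q) by (apply periodize_eq_upto; [lia | exact Hb1]).
    destruct (classic (eq_upto r (shift k b) b)) as [Hb2|Hb2].
    + left. intros i. symmetry. apply (shift_eq_of_borders q r k); [lia|assumption..|].
      apply periodize_eq_upto; [unfold k; lia | exact Hb2].
    + right. apply (shift_odd_border_lt q r k); try assumption.
      apply (periodize_lt_shift A); [assumption | unfold k; lia |].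
      replace (L - k) with r by (unfold k; lia). exact Hb2.
Qed.

End Periodize.

Lemma alt_lt_weak_between A a b : alt_lyndon A a -> alt_lyndon A b -> alt_lt a b ->
  exists q, alt_lyndon A q /\ weak q /\ alt_le a q /\ alt_le q b.
Proof.
  intros La Lb [j [Hab Hs]]. fold (sgn (S j)) in Hs.
  (* L even keeps q ⪯ b; L <= j + 2 puts every even shift below L within alt_lt_no_even_border. *)
  set (L := 2 * (j / 2 + 1)).
  assert (HjL : j < L <= j + 2).
  { pose proof (Nat.div_mod_eq j 2). pose proof (Nat.mod_upper_bound j 2). unfold L. lia. }
  assert (HLe : Nat.Even L) by (exists (j / 2 + 1); reflexivity).
  assert (HL : L <> 0) by lia.
  exists (periodize L b). split; [|split; [|split]].
  - apply (periodize_lyndon L b HL A a j); assumption.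
  - apply periodize_weak, HL.
  - right. exists j. split.
    + intros i Hi. rewrite periodize_small by lia. apply Hab, Hi.
    + rewrite periodize_small by lia. exact Hs.
  - apply (periodize_le L b HL A HLe Lb).
Qed.

Local Open Scope R_scope.

Lemma lyndon_system_anti A d d' x : alt_le d d' -> lyndon_system A d' x -> lyndon_system A d x.
Proof. intros Hle [Ox Hx]. split; [exact Ox|]. intros k. eapply alt_le_trans; eauto. Qed.

Lemma sys_factor_anti A d d' n w : alt_le d d' -> sys_factor A d' n w -> sys_factor A d n w.
Proof.
  intros Hle [Hw [x [Sx Hk]]]. split; [exact Hw|].
  exists x. split; [eapply lyndon_system_anti; eauto | exact Hk].
Qed.

Lemma is_card_le (P P' : list Z -> Prop) h h' : is_card P h -> is_card P' h' ->
  (forall w, P w -> P' w) -> (h <= h')%nat.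
Proof.
  intros [L [ND [HL <-]]] [L' [ND' [HL' <-]]] Hsub.
  apply NoDup_incl_length; [exact ND|]. intros w Hw. apply HL', Hsub, HL, Hw.
Qed.

Lemma is_card_sub (P P' : list Z -> Prop) h' : is_card P' h' ->
  (forall w, P w -> P' w) -> exists h, is_card P h.
Proof.
  intros [L' [ND' [HL' _]]] Hsub.
  set (f := fun w => if excluded_middle_informative (P w) then true else false).
  exists (length (filter f L')), (filter f L'). split; [|split]; [apply NoDup_filter, ND'| |reflexivity].
  intros w. rewrite filter_In. unfold f. destruct (excluded_middle_informative (P w)) as [Hw|Hw].
  - split; [intros _; exact Hw | intros _; split; [apply HL', Hsub, Hw | reflexivity]].
  - split; [intros [_ H]; discriminate | intros H; contradiction].
Qed.

Lemma is_card_sys_factor_pos A d n h : alt_lyndon A d -> is_card (sys_factor A d n) h -> (1 <= h)%nat.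
Proof.
  intros [Od Ld] [L [_ [HL <-]]].
  assert (Hin : In (map d (seq 0 n)) L).
  { apply HL. split; [rewrite length_map, length_seq; reflexivity|].
    exists d. split; [split; assumption|].
    exists 0%nat. intros i Hi.
    rewrite (nth_indep _ 0%Z (d 0%nat)), map_nth, seq_nth by (rewrite ?length_map, ?length_seq; exact Hi).
    reflexivity. }
  destruct L; [contradiction | simpl; lia].
Qed.

Lemma Un_cv_squeeze (lo mid hi : nat -> R) l : (forall n, lo n <= mid n <= hi n) ->
  Un_cv lo l -> Un_cv hi l -> Un_cv mid l.
Proof.
  intros Hb Hlo Hhi eps He.
  destruct (Hlo eps He) as [N1 H1], (Hhi eps He) as [N2 H2].
  exists (max N1 N2). intros n Hn. unfold R_dist in *.
  specialize (H1 n ltac:(lia)). specialize (H2 n ltac:(lia)). specialize (Hb n).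
  apply Rabs_def2 in H1. apply Rabs_def2 in H2. apply Rabs_def1; lra.
Qed.

Lemma ln_div_le x y n : (0 < x)%nat -> (x <= y)%nat ->
  ln (INR x) / INR (S n) <= ln (INR y) / INR (S n).
Proof.
  intros Hx Hxy. unfold Rdiv. apply Rmult_le_compat_r.
  - left. apply Rinv_0_lt_compat, lt_0_INR. lia.
  - destruct (le_lt_eq_dec _ _ Hxy) as [Hlt| ->]; [|right; reflexivity].
    left. apply ln_increasing; [apply lt_0_INR | apply lt_INR]; lia.
Qed.

Lemma attached_between A a q b beta : alt_lyndon A b ->
  alt_le a q -> alt_le q b -> attached A a beta -> attached A b beta -> attached A q beta.
Proof.
  intros Lb Haq Hqb [Ha [HHa Ca]] [Hb [HHb Cb]].
  assert (Hcard : forall n, {h | is_card (sys_factor A q n) h}).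
  { intros n. apply constructive_indefinite_description.
    apply (is_card_sub _ _ _ (HHa n)). intros w. apply sys_factor_anti, Haq. }
  exists (fun n => proj1_sig (Hcard n)). split; [intros n; exact (proj2_sig (Hcard n))|].
  apply (Un_cv_squeeze (fun m => ln (INR (Hb (S m))) / INR (S m)) _
                       (fun m => ln (INR (Ha (S m))) / INR (S m))); [|exact Cb|exact Ca].
  intros m. destruct (Hcard (S m)) as [h Hh]. simpl proj1_sig.
  pose proof (is_card_sys_factor_pos _ _ _ _ Lb (HHb (S m))).
  assert (Hbh : (Hb (S m) <= h)%nat).
  { apply (is_card_le _ _ _ _ (HHb (S m)) Hh). intros w. apply sys_factor_anti, Hqb. }
  assert (Hha : (h <= Ha (S m))%nat).
  { apply (is_card_le _ _ _ _ Hh (HHa (S m))). intros w. apply sys_factor_anti, Haq. }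
  split; apply ln_div_le; lia.
Qed.

Lemma weak_attached_of_alt_lt A beta a b :
  alt_lyndon A a -> attached A a beta -> alt_lyndon A b -> attached A b beta -> alt_lt a b ->
  exists d, alt_lyndon A d /\ weak d /\ attached A d beta.
Proof.
  intros La Aa Lb Ab Hab.
  destruct (alt_lt_weak_between A a b La Lb Hab) as [q [Lq [Wq [Haq Hqb]]]].
  exists q. split; [exact Lq | split; [exact Wq |]].
  exact (attached_between A a q b beta Lb Haq Hqb Aa Ab).
Qed.

Theorem proposition9 (A : list Z) (beta : R) :
  1 <= beta ->
  (exists d1 d2 : word,
      alt_lyndon A d1 /\ attached A d1 beta /\
      alt_lyndon A d2 /\ attached A d2 beta /\
      exists i, d1 i <> d2 i) ->
  exists d : word, alt_lyndon A d /\ weak d /\ attached A d beta.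
Proof.
  intros _ [d1 [d2 [L1 [A1 [L2 [A2 [i Hi]]]]]]].
  destruct (alt_lt_connex d1 d2 i Hi) as [H12|H21].
  - exact (weak_attached_of_alt_lt A beta d1 d2 L1 A1 L2 A2 H12).
  - exact (weak_attached_of_alt_lt A beta d2 d1 L2 A2 L1 A1 H21).
Qed.
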